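(* Let $(X,\leq)$ be a partially ordered set and suppose $d$ is a metric on $X$ such that $(X,d)$ is a complete metric space. Let $F:X\times X\to X$ be a continuous mapping having the mixed monotone property on $X$. Assume that for all $x,y,u,v\in X$ with $x\geq u$ and $y\leq v$, $$d\big(F(x,y),F(u,v)\big)\leq \delta(x,y,u,v)\,\big[d(x,u)+d(y,v)\big],$$ where $$\delta(x,y,u,v)=\frac{d(x,F(u,v))+d(y,F(v,u))+d(u,F(x,y))+d(v,F(y,x))}{1+2\big[d(x,F(x,y))+d(y,F(y,x))+d(u,F(u,v))+d(v,F(v,u))\big]}.$$ If there exist $x_0,y_0\in X$ such that $x_0\leq F(x_0,y_0)$ and $y_0\geq F(y_0,x_0)$, then $F$ has at least one coupled fixed point, i.e., there exist $x,y\in X$ with $x=F(x,y)$ and $y=F(y,x)$.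
   Context: A mapping $F:X\times X\to X$ on a partially ordered set $(X,\leq)$ has the mixed monotone property if $F(x,y)$ is monotone nondecreasing in $x$ and monotone nonincreasing in $y$: for all $x,y\in X$, $x_1\leq x_2$ implies $F(x_1,y)\leq F(x_2,y)$, and $y_1\leq y_2$ implies $F(x,y_1)\geq F(x,y_2)$. An element $(x,y)\in X\times X$ is a coupled fixed point of $F$ if $F(x,y)=x$ and $F(y,x)=y$. *)

From Stdlib Require Import Reals.
Open Scope R_scope.

Definition is_metric {X : Type} (d : X -> X -> R) : Prop :=
  (forall x y, 0 <= d x y) /\
  (forall x y, d x y = 0 <-> x = y) /\
  (forall x y, d x y = d y x) /\
  (forall x y z, d x z <= d x y + d y z).

Definition is_partial_order {X : Type} (le : X -> X -> Prop) : Prop :=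
  (forall x, le x x) /\
  (forall x y, le x y -> le y x -> x = y) /\
  (forall x y z, le x y -> le y z -> le x z).

Definition cauchy_seq {X : Type} (d : X -> X -> R) (u : nat -> X) : Prop :=
  forall eps, 0 < eps -> exists N : nat, forall m n, (N <= m)%nat -> (N <= n)%nat ->
    d (u m) (u n) < eps.

Definition seq_converges {X : Type} (d : X -> X -> R) (u : nat -> X) (l : X) : Prop :=
  forall eps, 0 < eps -> exists N : nat, forall n, (N <= n)%nat -> d (u n) l < eps.

Definition complete_metric {X : Type} (d : X -> X -> R) : Prop :=
  forall u : nat -> X, cauchy_seq d u -> exists l, seq_converges d u l.

Definition continuous2 {X : Type} (d : X -> X -> R) (F : X -> X -> X) : Prop :=
  forall x y eps, 0 < eps -> exists delta, 0 < delta /\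
    forall u v, d x u < delta -> d y v < delta -> d (F x y) (F u v) < eps.

Definition mixed_monotone {X : Type} (le : X -> X -> Prop) (F : X -> X -> X) : Prop :=
  (forall x1 x2 y, le x1 x2 -> le (F x1 y) (F x2 y)) /\
  (forall x y1 y2, le y1 y2 -> le (F x y2) (F x y1)).

Definition delta_fn {X : Type} (d : X -> X -> R) (F : X -> X -> X) (x y u v : X) : R :=
  (d x (F u v) + d y (F v u) + d u (F x y) + d v (F y x)) /
  (1 + 2 * (d x (F x y) + d y (F y x) + d u (F u v) + d v (F v u))).

(* Iterate the coupled map (x, y) |-> (F x y, F y x) from (x0, y0). Mixed monotonicity keeps
   x_n increasing and y_n decreasing, so the contractive condition applies to consecutive
   iterates. Writing a_n = d(x_n, x_(n+1)) + d(y_n, y_(n+1)), the two contractive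
   inequalities share the factor delta, whose denominator is 1 + 2(a_n + a_(n+1)); together
   with the triangle inequality they give a_(n+1) (1 + 2(a_n + a_(n+1))) <= 2(a_n + a_(n+1)) a_n.
   Hence a_n is nonincreasing, and then a_(n+1) <= k a_n with k = 4a_0 / (1 + 4a_0) < 1.
   Both sequences are therefore Cauchy, and by continuity their limits form a coupled
   fixed point. *)
From Stdlib Require Import Reals Lra Lia Psatz.
Open Scope R_scope.

Lemma delta_fn_swap {X : Type} (d : X -> X -> R) (F : X -> X -> X) (x y u v : X) :
  delta_fn d F x y u v = delta_fn d F v u y x.
Proof. unfold delta_fn; f_equal; [|f_equal; f_equal]; ring. Qed.

Lemma geometric_decay (a : nat -> R) (k : R) :
  0 <= k -> (forall n, a (S n) <= k * a n) -> forall n, a n <= a 0%nat * k ^ n.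
Proof.
  intros Hk Hstep n; induction n as [|n IH]; simpl; [lra|].
  pose proof (Hstep n); pose proof (Rmult_le_compat_l k _ _ Hk IH); lra.
Qed.

Section StepInequality.

Variables u v : R.
Hypothesis (Hu : 0 <= u) (Hv : 0 <= v).
Hypothesis Hstep : v * (1 + 2 * (u + v)) <= 2 * (u + v) * u.

Lemma step_ineq_nonincreasing : v <= u.
Proof. nra. Qed.

Lemma step_ineq_ratio (A : R) : u <= A -> v * (1 + 4 * A) <= 4 * A * u.
Proof. pose proof step_ineq_nonincreasing; nra. Qed.

End StepInequality.

Lemma contraction_ratio_bounds (A : R) : 0 <= A -> 0 <= 4 * A / (1 + 4 * A) < 1.
Proof.
  intro HA; split.
  - apply Rmult_le_pos; [lra|]; apply Rlt_le, Rinv_0_lt_compat; lra.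
  - apply Rmult_lt_reg_r with (1 + 4 * A); [lra|].
    replace (4 * A / (1 + 4 * A) * (1 + 4 * A)) with (4 * A) by (field; lra); lra.
Qed.

Lemma step_ineq_geometric (a : nat -> R) :
  (forall n, 0 <= a n) ->
  (forall n, a (S n) * (1 + 2 * (a n + a (S n))) <= 2 * (a n + a (S n)) * a n) ->
  forall n, a n <= a 0%nat * (4 * a 0%nat / (1 + 4 * a 0%nat)) ^ n.
Proof.
  intros Hpos Hstep.
  set (A := a 0%nat); pose proof (Hpos 0%nat) as HA; fold A in HA.
  assert (Hbound : forall n, a n <= A).
  { induction n as [|n IH]; [unfold A; lra|].
    pose proof (step_ineq_nonincreasing _ _ (Hpos n) (Hpos (S n)) (Hstep n)); lra. }
  apply geometric_decay; [apply contraction_ratio_bounds; lra|].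
  intro n.
  pose proof (step_ineq_ratio _ _ (Hpos n) (Hpos (S n)) (Hstep n) A (Hbound n)).
  apply Rmult_le_reg_r with (1 + 4 * A); [lra|].
  replace (4 * A / (1 + 4 * A) * a n * (1 + 4 * A)) with (4 * A * a n) by (field; lra).
  lra.
Qed.

Section Metric.

Variables (X : Type) (d : X -> X -> R).
Hypothesis Hd : is_metric d.

Lemma dist_pos x y : 0 <= d x y.
Proof. apply Hd. Qed.

Lemma dist_self x : d x x = 0.
Proof. apply Hd; reflexivity. Qed.

Lemma dist_sym x y : d x y = d y x.
Proof. apply Hd. Qed.

Lemma dist_triangle x y z : d x z <= d x y + d y z.
Proof. apply Hd. Qed.

Lemma dist_geometric_tail (z : nat -> X) (C k : R) :
  0 <= C -> 0 <= k -> k <= 1 -> (forall n, d (z n) (z (S n)) <= C * k ^ n) ->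
  forall n p, d (z n) (z (n + p)%nat) * (1 - k) <= C * k ^ n.
Proof.
  intros HC Hk0 Hk1 Hstep n p.
  assert (Hsum : d (z n) (z (n + p)%nat) * (1 - k) <= C * k ^ n * (1 - k ^ p)).
  { induction p as [|p IH].
    - rewrite Nat.add_0_r, dist_self; simpl; lra.
    - replace (n + S p)%nat with (S (n + p)) by lia.
      pose proof (dist_triangle (z n) (z (n + p)%nat) (z (S (n + p)))).
      pose proof (Hstep (n + p)%nat) as Hlast; rewrite pow_add in Hlast.
      simpl; nra. }
  pose proof (pow_le k p Hk0); pose proof (Rmult_le_pos _ _ HC (pow_le k n Hk0)); nra.
Qed.

Lemma cauchy_of_geometric_steps (z : nat -> X) (C k : R) :
  0 <= C -> 0 <= k -> k < 1 -> (forall n, d (z n) (z (S n)) <= C * k ^ n) ->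
  cauchy_seq d z.
Proof.
  intros HC Hk0 Hk1 Hstep eps Heps.
  assert (Htarget : 0 < eps * (1 - k) / (C + 1)).
  { apply Rdiv_lt_0_compat; [apply Rmult_lt_0_compat|]; lra. }
  destruct (pow_lt_1_zero k ltac:(rewrite Rabs_pos_eq; lra) _ Htarget) as [N HN].
  assert (Hfar : forall m n, (N <= m)%nat -> (m <= n)%nat -> d (z m) (z n) < eps).
  { intros m n Hm Hmn; replace n with (m + (n - m))%nat by lia.
    pose proof (dist_geometric_tail z C k HC Hk0 (Rlt_le _ _ Hk1) Hstep m (n - m)) as Htail.
    pose proof (HN m Hm) as Hkm; rewrite Rabs_pos_eq in Hkm by (apply pow_le; lra).
    apply (Rmult_lt_compat_l (C + 1)) in Hkm; [|lra].
    replace ((C + 1) * (eps * (1 - k) / (C + 1))) with (eps * (1 - k)) in Hkm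
      by (field; lra).
    pose proof (pow_le k m Hk0); nra. }
  exists N; intros m n Hm Hn; destruct (Nat.le_ge_cases m n).
  - now apply Hfar.
  - rewrite dist_sym; now apply Hfar.
Qed.

Lemma continuous2_limit_fixed (F : X -> X -> X) (xs ys : nat -> X) (a b : X) :
  continuous2 d F -> seq_converges d xs a -> seq_converges d ys b ->
  (forall n, xs (S n) = F (xs n) (ys n)) -> F a b = a.
Proof.
  intros Hcont Hx Hy Hrec; apply Hd.
  destruct (Rle_lt_or_eq_dec _ _ (dist_pos (F a b) a)) as [Hlt|]; [exfalso|easy].
  set (e := d (F a b) a) in *.
  destruct (Hcont a b (e / 2)) as [del [Hdel Hnear]]; [lra|].
  destruct (Hx del Hdel) as [N1 HN1].
  destruct (Hy del Hdel) as [N2 HN2].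
  destruct (Hx (e / 2)) as [N3 HN3]; [lra|].
  set (n := (N1 + N2 + N3)%nat).
  assert (Ha : d a (xs n) < del) by (rewrite dist_sym; apply HN1; lia).
  assert (Hb : d b (ys n) < del) by (rewrite dist_sym; apply HN2; lia).
  assert (Hnext : d (xs (S n)) a < e / 2) by (apply HN3; lia).
  pose proof (Hnear _ _ Ha Hb) as Himage; rewrite <- Hrec in Himage.
  pose proof (dist_triangle (F a b) (xs (S n)) a); unfold e in *; lra.
Qed.

End Metric.

Definition coupled_step {X : Type} (F : X -> X -> X) (p : X * X) : X * X :=
  (F (fst p) (snd p), F (snd p) (fst p)).

Definition coupled_ascending {X : Type} (le : X -> X -> Prop) (F : X -> X -> X)
  (p : X * X) : Prop :=
  le (fst p) (F (fst p) (snd p)) /\ le (F (snd p) (fst p)) (snd p).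

Lemma coupled_step_ascending {X : Type} (le : X -> X -> Prop) (F : X -> X -> X) (p : X * X) :
  is_partial_order le -> mixed_monotone le F ->
  coupled_ascending le F p -> coupled_ascending le F (coupled_step F p).
Proof.
  destruct p as [x y]; unfold coupled_ascending, coupled_step; simpl.
  intros [_ [_ Htrans]] [Hmono1 Hmono2] [Hx Hy]; split.
  - apply Htrans with (F (F x y) y); [now apply Hmono1 | now apply Hmono2].
  - apply Htrans with (F y (F x y)); [now apply Hmono1 | now apply Hmono2].
Qed.

Lemma coupled_orbit_ascending {X : Type} (le : X -> X -> Prop) (F : X -> X -> X) (p : X * X) :
  is_partial_order le -> mixed_monotone le F -> coupled_ascending le F p ->
  forall n, coupled_ascending le F (Nat.iter n (coupled_step F) p).
Proof.
  intros Hle Hmono Hp n; induction n as [|n IH]; [easy|].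
  now apply coupled_step_ascending.
Qed.

Definition coupled_gap {X : Type} (d : X -> X -> R) (F : X -> X -> X) (p : X * X) : R :=
  d (fst p) (F (fst p) (snd p)) + d (snd p) (F (snd p) (fst p)).

Lemma coupled_gap_bounds {X : Type} (d : X -> X -> R) (F : X -> X -> X) (p : X * X) :
  is_metric d ->
  d (fst p) (fst (coupled_step F p)) <= coupled_gap d F p /\
  d (snd p) (snd (coupled_step F p)) <= coupled_gap d F p.
Proof.
  intro Hd; unfold coupled_gap, coupled_step; simpl.
  pose proof (dist_pos _ d Hd (fst p) (F (fst p) (snd p))).
  pose proof (dist_pos _ d Hd (snd p) (F (snd p) (fst p))); split; lra.
Qed.

Lemma coupled_gap_step_ineq {X : Type} (le : X -> X -> Prop) (d : X -> X -> R)
  (F : X -> X -> X) (p : X * X) :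
  is_metric d ->
  (forall x y u v, le u x -> le y v ->
     d (F x y) (F u v) <= delta_fn d F x y u v * (d x u + d y v)) ->
  coupled_ascending le F p ->
  let A := coupled_gap d F p in let B := coupled_gap d F (coupled_step F p) in
  B * (1 + 2 * (A + B)) <= 2 * (A + B) * A.
Proof.
  destruct p as [x y]; unfold coupled_ascending, coupled_gap, coupled_step; simpl.
  intros Hd Hcontr [Hx Hy].
  set (x' := F x y); set (y' := F y x); set (x'' := F x' y'); set (y'' := F y' x').
  set (A := d x x' + d y y'); set (B := d x' x'' + d y' y'').
  set (D := 1 + 2 * (A + B)); set (c := delta_fn d F x' y' x y).
  pose proof (dist_pos _ d Hd) as Hpos; pose proof (dist_triangle _ d Hd) as Htri.
  assert (HA0 : 0 <= A) by (unfold A; pose proof (Hpos x x'); pose proof (Hpos y y'); lra).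
  assert (HD : 0 < D)
    by (unfold D, B; pose proof (Hpos x' x''); pose proof (Hpos y' y''); lra).
  (* Two of the four numerator terms of [c] vanish along the orbit. *)
  assert (Hc : c * D = d x x'' + d y y'').
  { unfold c, delta_fn; fold x' y' x'' y''.
    rewrite !(dist_self _ d Hd).
    replace (1 + 2 * (d x' x'' + d y' y'' + d x x' + d y y')) with D
      by (unfold D, A, B; ring).
    field; lra. }
  assert (HA : d x' x + d y' y = A)
    by (unfold A; rewrite (dist_sym _ d Hd x' x), (dist_sym _ d Hd y' y); ring).
  pose proof (Hcontr x' y' x y Hx Hy) as Hx'; fold c x'' in Hx'; rewrite HA in Hx'.
  pose proof (Hcontr y x y' x' Hy Hx) as Hy'.
  rewrite (delta_fn_swap d F y x y' x') in Hy'; fold c y'' in Hy'.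
  replace (d y y' + d x x') with A in Hy' by (unfold A; ring).
  assert (Htwo : d x x'' + d y y'' <= A + B)
    by (pose proof (Htri x x' x''); pose proof (Htri y y' y''); unfold A, B; lra).
  fold x' y' in Hx', Hy'; rewrite (dist_sym _ d Hd x'' x') in Hx'.
  apply Rle_trans with (2 * A * (c * D)).
  - replace (2 * A * (c * D)) with ((2 * c * A) * D) by ring.
    apply Rmult_le_compat_r; unfold B; lra.
  - rewrite Hc; nra.
Qed.

Theorem theorem2p1 (X : Type) (le : X -> X -> Prop) (d : X -> X -> R)
  (F : X -> X -> X)
  (Hle : is_partial_order le) (Hd : is_metric d) (Hcomp : complete_metric d)
  (Hcont : continuous2 d F) (Hmono : mixed_monotone le F)
  (Hcontr : forall x y u v, le u x -> le y v ->
     d (F x y) (F u v) <= delta_fn d F x y u v * (d x u + d y v))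
  (Hinit : exists x0 y0, le x0 (F x0 y0) /\ le (F y0 x0) y0) :
  exists x y, F x y = x /\ F y x = y.
Proof.
  destruct Hinit as [x0 [y0 Hinit]].
  set (orbit n := Nat.iter n (coupled_step F) (x0, y0)).
  set (xs n := fst (orbit n)); set (ys n := snd (orbit n)).
  set (a n := coupled_gap d F (orbit n)).
  set (k := 4 * a 0%nat / (1 + 4 * a 0%nat)).
  assert (Hgap : forall n, d (xs n) (xs (S n)) <= a n /\ d (ys n) (ys (S n)) <= a n)
    by (intro n; exact (coupled_gap_bounds d F (orbit n) Hd)).
  assert (Hpos : forall n, 0 <= a n)
    by (intro n; pose proof (Hgap n); pose proof (dist_pos _ d Hd (xs n) (xs (S n))); lra).
  assert (Hdecay : forall n, a n <= a 0%nat * k ^ n).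
  { apply step_ineq_geometric; [exact Hpos|]; intro n.
    apply (coupled_gap_step_ineq le d F); [exact Hd | exact Hcontr |].
    now apply coupled_orbit_ascending. }
  destruct (contraction_ratio_bounds (a 0%nat) (Hpos 0%nat)) as [Hk0 Hk1].
  assert (Hxs : cauchy_seq d xs).
  { apply (cauchy_of_geometric_steps _ d Hd xs (a 0%nat) k); try easy.
    intro n; pose proof (Hgap n); pose proof (Hdecay n); lra. }
  assert (Hys : cauchy_seq d ys).
  { apply (cauchy_of_geometric_steps _ d Hd ys (a 0%nat) k); try easy.
    intro n; pose proof (Hgap n); pose proof (Hdecay n); lra. }
  destruct (Hcomp xs Hxs) as [x Hx]; destruct (Hcomp ys Hys) as [y Hy].
  exists x, y; split.
  - now apply (continuous2_limit_fixed _ d Hd F xs ys).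
  - now apply (continuous2_limit_fixed _ d Hd F ys xs).
Qed.
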